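(* Let $E\in M_n(\mathbb{FT})$ be an idempotent of rank $n$, let $A$ be an element of the $\mathcal H$-class of $E$ in $M_n(\mathbb{FT})$, and let $\widehat{\phi_A}:\mathcal{P}C(E)\to\mathcal{P}C(E)$ be the map induced on the projectivisation of $C(E)$ by left multiplication $x\mapsto A\otimes x$. Then, identifying projective space with $\mathbb{R}^{n-1}$ via $(x_1,\dots,x_n)\mapsto(x_1-x_n,\dots,x_{n-1}-x_n)$, the map $\widehat{\phi_A}$ is the restriction to $\mathcal{P}C(E)\subseteq\mathbb{R}^{n-1}$ of a classical affine linear map.
   Context: $\mathbb{FT}$ is $\mathbb{R}$ with $a\oplus b=\max(a,b)$, $a\otimes b=a+b$; $M_n(\mathbb{FT})$ is the semigroup of real $n\times n$ matrices under $(A\otimes B)_{i,j}=\max_k(A_{i,k}+B_{k,j})$, acting on $\mathbb{FT}^n$ similarly. $C(E)$ is the set of finite componentwise maxima of columns of $E$ shifted by real constants; the rank of an idempotent $E$ is the minimal cardinality of a generating set of $C(E)$. Projective tropical $(n-1)$-space is $\mathbb{R}^n$ modulo $x\sim y$ iff $y=x+\lambda(1,\dots,1)$ for some $\lambda\in\mathbb{R}$; $\mathcal{P}C(E)$ is the image of $C(E)$ there. Green's relations: $a\,\mathcal{R}\,b$ iff $aS^1=bS^1$, $a\,\mathcal{L}\,b$ iff $S^1a=S^1b$, $\mathcal{H}=\mathcal{L}\cap\mathcal{R}$. *)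

(* FT = (R, max, +) with R : realType (the real numbers). *)
From HB Require Import structures.
From mathcomp Require Import all_boot all_order all_algebra.
From mathcomp Require Import reals.
Set Implicit Arguments. Unset Strict Implicit. Unset Printing Implicit Defensive.
Import Order.TTheory GRing.Theory Num.Theory.
Local Open Scope ring_scope.

Section Tropical.
Variable R : realType.

Definition tmax (m : nat) (F : 'I_m.+1 -> R) : R :=
  \big[Num.max/F ord0]_(k < m.+1) F k.

Definition tmul (p q r : nat) (A : 'M[R]_(p, q.+1)) (B : 'M[R]_(q.+1, r))
  : 'M[R]_(p, r) :=
  \matrix_(i, j) tmax (fun k => A i k + B k j).

Definition tspan (n k : nat) (g : 'I_k -> 'cV[R]_n) (x : 'cV[R]_n) : Prop :=
  exists (m : nat) (J : 'I_m.+1 -> 'I_k) (lam : 'I_m.+1 -> R),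
    forall i : 'I_n, x i 0 = tmax (fun l => g (J l) i 0 + lam l).

Definition colspace (n : nat) (E : 'M[R]_n) (x : 'cV[R]_n) : Prop :=
  tspan (fun j : 'I_n => col j E) x.

Definition generates (n k : nat) (E : 'M[R]_n) (g : 'I_k -> 'cV[R]_n) : Prop :=
  forall x, tspan g x <-> colspace E x.

Definition trank_is (n : nat) (E : 'M[R]_n) (r : nat) : Prop :=
  (exists g : 'I_r -> 'cV[R]_n, generates E g) /\
  (forall (k : nat) (g : 'I_k -> 'cV[R]_n), generates E g -> (r <= k)%N).

Definition tidempotent (n : nat) (E : 'M[R]_n.+1) : Prop := tmul E E = E.

(* Green's relations in the semigroup M_n(FT) (S^1 = S with an adjoined identity) *)
Definition greenR (n : nat) (A B : 'M[R]_n.+1) : Prop :=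
  (A = B \/ exists X : 'M[R]_n.+1, A = tmul B X) /\
  (B = A \/ exists Y : 'M[R]_n.+1, B = tmul A Y).

Definition greenL (n : nat) (A B : 'M[R]_n.+1) : Prop :=
  (A = B \/ exists X : 'M[R]_n.+1, A = tmul X B) /\
  (B = A \/ exists Y : 'M[R]_n.+1, B = tmul Y A).

Definition greenH (n : nat) (A B : 'M[R]_n.+1) : Prop :=
  greenL A B /\ greenR A B.

Definition projcoord (n : nat) (x : 'cV[R]_n.+1) : 'cV[R]_n :=
  \col_(i < n) (x (widen_ord (leqnSn n) i) 0 - x ord_max 0).

End Tropical.

(* A full-rank idempotent E has zero diagonal and no 2-cycle of weight zero,
   for otherwise one column of E would be redundant in C(E).  If A is
   L-related to E, then A = X E and E = Y A; the zero diagonal makes each row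
   of E a tropical scalar multiple of a row of A, and the absence of zero
   2-cycles makes this correspondence a bijection.  So every row of A is a
   shifted row of E, and on C(E), the set of fixed points of E, left
   multiplication by A just permutes the coordinates and adds constants: an
   affine map in the coordinates x_i - x_n. *)

From mathcomp Require Import all_boot all_order all_algebra.
From mathcomp Require Import reals.
From mathcomp Require Import lra.
Set Implicit Arguments. Unset Strict Implicit. Unset Printing Implicit Defensive.
Import Order.TTheory GRing.Theory Num.Theory.
Local Open Scope ring_scope.

Section TropicalMax.
Variable R : realType.
Implicit Types (m : nat) (c : R).

Lemma tmax_ge m (F : 'I_m.+1 -> R) k : F k <= tmax F.
Proof. exact: le_bigmax. Qed.

Lemma tmax_le m (F : 'I_m.+1 -> R) c : (forall k, F k <= c) -> tmax F <= c.
Proof. by move=> Fc; apply: bigmax_le. Qed.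

Lemma tmax_attained m (F : 'I_m.+1 -> R) : exists k, tmax F = F k.
Proof.
exists [arg max_(k > ord0) F k]%O; case: arg_maxP => //= k _ Fk.
by apply/le_anti; rewrite tmax_ge andbT; apply: tmax_le => i; apply: Fk.
Qed.

Lemma eq_tmax m (F G : 'I_m.+1 -> R) : F =1 G -> tmax F = tmax G.
Proof. by move=> FG; rewrite /tmax FG; apply: eq_bigr. Qed.

Lemma tmaxDr m (F : 'I_m.+1 -> R) c : tmax (fun k => F k + c) = tmax F + c.
Proof. by rewrite /tmax (big_morph (+%R^~ c) (fun x y => addr_maxl x y c) erefl). Qed.

Lemma tmulE p q r (A : 'M[R]_(p, q.+1)) (B : 'M[R]_(q.+1, r)) i j :
  tmul A B i j = tmax (fun k => A i k + B k j).
Proof. exact: mxE. Qed.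

End TropicalMax.

Section FixedPoints.
Variables (R : realType) (n : nat) (E : 'M[R]_n.+1).

Definition tfixed (x : 'cV[R]_n.+1) : Prop :=
  forall i, x i 0 = tmax (fun k => E i k + x k 0).

Lemma tfixed_le x : tfixed x -> forall i k, E i k + x k 0 <= x i 0.
Proof. by move=> fx i k; rewrite (fx i); apply: (tmax_ge (fun k => _ + _)). Qed.

Lemma tspan_tfixed (p : nat) (g : 'I_p -> 'cV[R]_n.+1) x :
  (forall j, tfixed (g j)) -> tspan g x -> tfixed x.
Proof.
move=> fg [m [J [lam Hx]]] i; apply/le_anti/andP; split.
- rewrite {1}Hx; have [l ->] := tmax_attained (fun l => g (J l) i 0 + lam l).
  have [k0 gk0] := tmax_attained (fun k => E i k + g (J l) k 0).
  rewrite (fg _ i) gk0 -addrA.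
  apply: le_trans (tmax_ge (fun k => E i k + x k 0) k0); rewrite lerD2l Hx.
  exact: (tmax_ge (fun l => g (J l) k0 0 + lam l)).
- apply: tmax_le => k; rewrite (Hx i) (Hx k).
  have [l ->] := tmax_attained (fun l => g (J l) k 0 + lam l).
  apply: le_trans (tmax_ge (fun l => g (J l) i 0 + lam l) l); rewrite addrA lerD2r.
  exact: tfixed_le.
Qed.

Hypothesis idE : tidempotent E.

Lemma tidempotent_le i l k : E i l + E l k <= E i k.
Proof. by have := tmax_ge (fun l => E i l + E l k) l; rewrite -tmulE idE. Qed.

Lemma tidempotent_col_tfixed j : tfixed (col j E).
Proof.
by move=> i; rewrite mxE -{1}idE tmulE; apply: eq_tmax => k; rewrite mxE.
Qed.

Lemma colspace_tfixed x : colspace E x -> tfixed x.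
Proof. exact/tspan_tfixed/tidempotent_col_tfixed. Qed.

End FixedPoints.

Section FullRank.
Variable R : realType.

Definition redundant_col n (E : 'M[R]_n.+1) (j : 'I_n.+1) : Prop :=
  forall x, tfixed E x ->
  forall i, exists2 k, k != j & E i j + x j 0 <= E i k + x k 0.

Lemma redundant_col_generates n (E : 'M[R]_n.+2) j :
  tidempotent E -> redundant_col E j -> generates E (fun k => col (lift j k) E).
Proof.
move=> idE rj x; split=> [[m [J [lam Hx]]] | /(colspace_tfixed idE) fx].
  by exists m, (fun l => lift j (J l)), lam.
exists n, id, (fun k => x (lift j k) 0) => i; apply/le_anti/andP; split; last first.
  by apply: tmax_le => k; rewrite mxE; apply: tfixed_le.
have [k kj xik] : exists2 k, k != j & x i 0 <= E i k + x k 0.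
  have [k0 Ek0] := tmax_attained (fun k => E i k + x k 0).
  have [k0j|k0j] := eqVneq k0 j; last by exists k0 => //; rewrite fx Ek0.
  by have [k kj jk] := rj x fx i; exists k => //; rewrite fx Ek0 k0j.
case: (unliftP j k) kj xik => [k' -> _ xik|->]; last by rewrite eqxx.
apply: le_trans xik _.
by have := tmax_ge (fun l => col (lift j l) E i 0 + x (lift j l) 0) k'; rewrite mxE.
Qed.

Lemma full_trank_irredundant n (E : 'M[R]_n.+1) j :
  tidempotent E -> trank_is E n.+1 -> ~ redundant_col E j.
Proof.
move=> idE [_ minE] rj; case: n E j idE minE rj => [|n] E j idE minE rj.
  have [k kj _] := rj _ (tidempotent_col_tfixed idE j) j.
  by rewrite (ord1 k) (ord1 j) eqxx in kj.
by have := minE _ _ (redundant_col_generates idE rj); rewrite ltnn.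
Qed.

Variables (n : nat) (E : 'M[R]_n.+1).
Hypotheses (idE : tidempotent E) (rkE : trank_is E n.+1).

Lemma full_trank_diag j : E j j = 0.
Proof.
(* If E j j < 0, the maximum defining (E E) i j = E i j is never attained at j. *)
apply/le_anti; rewrite -(lerD2l (E j j)) addr0 tidempotent_le //=.
rewrite leNgt; apply/negP => Ejj_lt0; apply: (full_trank_irredundant idE rkE (j := j)).
move=> x fx i; have [k Ek] := tmax_attained (fun k => E i k + E k j).
rewrite -tmulE idE in Ek.
have [kj|kj] := eqVneq k j; first by move: Ek; rewrite kj => Ek; lra.
by exists k => //; rewrite Ek -addrA lerD2l tfixed_le.
Qed.

Lemma full_trank_cycle j j' : j != j' -> E j j' + E j' j < 0.
Proof.
move=> jj'; rewrite lt_neqAle -{2}(full_trank_diag j) tidempotent_le // andbT.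
apply/eqP => cyc0; apply: (full_trank_irredundant idE rkE (j := j)).
move=> x fx i; exists j'; first by rewrite eq_sym.
have := tidempotent_le idE i j j'; have := tfixed_le fx j' j; lra.
Qed.

End FullRank.

Section GreenL.
Variables (R : realType) (n : nat) (E A : 'M[R]_n.+1).
Hypotheses (idE : tidempotent E) (rkE : trank_is E n.+1).

Lemma greenL_tidempotent_factor :
  greenL A E -> exists X Y, A = tmul X E /\ E = tmul Y A.
Proof.
move=> [[AE|[X AXE]] [EA|[Y EYA]]];
  [exists E, E | exists E, Y | exists X, E | exists X, Y]; split=> //.
all: by rewrite ?AE -?EA idE.
Qed.

Lemma tmul_tidempotent_le (X : 'M[R]_n.+1) l a b :
  tmul X E l a + E a b <= tmul X E l b.
Proof.
rewrite !tmulE; have [m ->] := tmax_attained (fun m => X l m + E m a).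
rewrite -addrA; apply: le_trans (tmax_ge (fun m => X l m + E m b) m).
by rewrite lerD2l tidempotent_le.
Qed.

Lemma greenL_row_shift :
  greenL A E -> exists (tau : 'I_n.+1 -> 'I_n.+1) (c : 'I_n.+1 -> R),
    forall i k, A i k = E (tau i) k + c i.
Proof.
case/greenL_tidempotent_factor=> X [Y] [AXE EYA].
have E_row_of_A j : exists l, forall b, E j b = A l b + Y j l.
  have := full_trank_diag idE rkE j; rewrite {1}EYA tmulE.
  have [l ->] := tmax_attained (fun l => Y j l + A l j) => Yl0.
  exists l => b; apply/le_anti; rewrite {2}EYA tmulE addrC tmax_ge andbT.
  by have := tmul_tidempotent_le X l j b; rewrite -AXE; lra.
have [t Et] := fin_all_exists E_row_of_A.
have t_inj : injective t.
  move=> j j' tjj'; apply/eqP; apply: contraT => jj'.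
  have := full_trank_cycle idE rkE jj'.
  have := full_trank_diag idE rkE j; have := full_trank_diag idE rkE j'.
  rewrite (Et j j) (Et j j') (Et j' j) (Et j' j') tjj'; lra.
exists (invF t_inj), (fun i => - Y (invF t_inj i) i) => i k.
by rewrite Et f_invF; lra.
Qed.

End GreenL.

Lemma tmul_row_shift_tfixed (R : realType) n (E A : 'M[R]_n.+1) tau c x :
  (forall i k, A i k = E (tau i) k + c i) -> tfixed E x ->
  tmul A x = \col_i (x (tau i) 0 + c i).
Proof.
move=> Ashift fx; apply/matrixP => i j; rewrite (ord1 j) tmulE mxE fx -tmaxDr.
by apply: eq_tmax => k; rewrite Ashift addrAC.
Qed.

Section ProjectiveCoordinates.
Variables (R : realType) (n : nat).

Definition projcoord_row (a : 'I_n.+1) : 'rV[R]_n :=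
  if unlift ord_max a is Some k then delta_mx 0 k else 0.

Lemma projcoord_rowE (a : 'I_n.+1) x :
  (projcoord_row a *m projcoord x) 0 0 = x a 0 - x ord_max 0.
Proof.
rewrite /projcoord_row; case: unliftP => [k ->|->]; last by rewrite mul0mx mxE subrr.
rewrite -rowE !mxE; congr (x _ 0 - _); exact/val_inj/esym/(lift_max (k : 'I_n)).
Qed.

Lemma projcoord_reindex_affine (tau : 'I_n.+1 -> 'I_n.+1) (c : 'I_n.+1 -> R) :
  exists (M : 'M[R]_n) (d : 'cV[R]_n), forall x : 'cV[R]_n.+1,
    projcoord (\col_i (x (tau i) 0 + c i)) = M *m projcoord x + d.
Proof.
pose wid := widen_ord (leqnSn n).
set M := \matrix_i (projcoord_row (tau (wid i)) - projcoord_row (tau ord_max)).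
exists M, (\col_i (c (wid i) - c ord_max)) => x.
apply/matrixP => i j; rewrite (ord1 j) [RHS]mxE.
have -> : (M *m projcoord x) i 0 = (row i M *m projcoord x) 0 0.
  by rewrite -row_mul [RHS]mxE.
rewrite /M rowK mulmxBl [(_ - _ : 'M_1) 0 0]mxE [(- _ : 'M_1) 0 0]mxE.
by rewrite !projcoord_rowE !mxE; lra.
Qed.

End ProjectiveCoordinates.

Theorem corollary7p5 (R : realType) (n : nat) (E A : 'M[R]_n.+1) :
  tidempotent E -> trank_is E n.+1 -> greenH A E ->
  exists (M : 'M[R]_n) (c : 'cV[R]_n),
    forall x : 'cV[R]_n.+1, colspace E x ->
      projcoord (tmul A x) = M *m projcoord x + c.
Proof.
move=> idE rkE [AE _].
have [tau [c Ashift]] := greenL_row_shift idE rkE AE.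
have [M [d Maff]] := projcoord_reindex_affine tau c.
exists M, d => x /(colspace_tfixed idE) fx.
by rewrite (tmul_row_shift_tfixed Ashift fx) Maff.
Qed.
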